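(* Let $1\le p<\infty$ and let $f$ be a continuous real function on $[0,1]$. Then there are constants $0<c_1\le c_2$, independent of $f$ and $t$, such that for all $0<t\le 1$, $$c_1\, t\,\upsilon_p\big([t^{-1}]^p,f\big)\le K(f,t;L^\infty,BV_p)\le c_2\, t\,\upsilon_p\big([t^{-1}]^p,f\big),$$ where $[x]$ denotes the integer part of $x$.
   Context: For a function $f$ on $[0,1]$ and a positive integer $n$, the modulus of $p$-variation is $\upsilon_p(n,f)=\sup\big(\sum_{j=1}^n|f(I_j)|^p\big)^{1/p}$, the supremum over all collections $\{I_j\}_{j=1}^n$ of nonoverlapping subintervals of $[0,1]$, where $f(I)=f(\sup I)-f(\inf I)$. The $p$-variation is $\mathrm{Var}_p(g)=\sup\big(\sum_j|g(I_j)|^p\big)^{1/p}$, the supremum over all finite collections of nonoverlapping subintervals of $[0,1]$, and $BV_p$ is the space of functions on $[0,1]$ with $\mathrm{Var}_p(g)<\infty$. The $K$-functional is $K(f,t;L^\infty,BV_p)=\inf_{g\in BV_p}\big(\|f-g\|_{L^\infty}+t\,\mathrm{Var}_p(g)\big)$. *)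

From HB Require Import structures.
From mathcomp Require Import all_boot all_order all_algebra.
From mathcomp Require Import all_classical all_reals all_analysis.
Set Implicit Arguments. Unset Strict Implicit. Unset Printing Implicit Defensive.
Import Order.TTheory GRing.Theory Num.Theory.
Import numFieldNormedType.Exports.
Local Open Scope classical_set_scope.
Local Open Scope ring_scope.

Section Defs.
Variable R : realType.

(* A family of n intervals [a j, b j] in [0,1], pairwise nonoverlapping
   (interiors disjoint).  Only endpoints matter since f(I)=f(sup I)-f(inf I). *)
Definition nonoverlapping (n : nat) (a b : 'I_n -> R) : Prop :=
  (forall j, 0 <= a j /\ a j <= b j /\ b j <= 1) /\
  (forall i j, i != j -> b i <= a j \/ b j <= a i).

Definition pvar_sum (p : R) (g : R -> R) (n : nat) (a b : 'I_n -> R) : R :=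
  (\sum_(j < n) `|g (b j) - g (a j)| `^ p) `^ p^-1.

Definition upsilon (p : R) (n : nat) (f : R -> R) : \bar R :=
  ereal_sup [set x | exists a b : 'I_n -> R,
    nonoverlapping a b /\ x = (pvar_sum p f a b)%:E].

Definition Varp (p : R) (g : R -> R) : \bar R :=
  ereal_sup [set x | exists n (a b : 'I_n -> R),
    nonoverlapping a b /\ x = (pvar_sum p g a b)%:E].

Definition Linf01 (h : R -> R) : \bar R :=
  ereal_inf [set M : \bar R | (@lebesgue_measure R).-negligible
    ([set x | 0 <= x <= 1] `&` [set x | (M < (`|h x|)%:E)%E])].

Definition Kfun (p : R) (f : R -> R) (t : R) : \bar R :=
  ereal_inf [set x | exists2 g : R -> R, (Varp p g < +oo)%E &
    x = (Linf01 (fun y => (f y - g y)%R) + t%:E * Varp p g)%E].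

Definition nindex (p t : R) : nat := Num.truncn ((Num.truncn t^-1)%:R `^ p).

End Defs.

From HB Require Import structures.
From mathcomp Require Import all_boot all_order all_algebra.
From mathcomp Require Import all_classical all_reals all_analysis.
From mathcomp Require Import ring lra.
Import Order.TTheory GRing.Theory Num.Theory.
Import numFieldNormedType.Exports.
Local Open Scope classical_set_scope.
Local Open Scope ring_scope.

(* If |f - g| <= M almost everywhere, then close to both ends
   of an interval [a, b] there are points x1 <= x2 where |f - g| <= M, and by
   continuity of f, |f b - f a| <= |g x2 - g x1| + 2M + eps.  Summing over n
   nonoverlapping intervals with a Minkowski-type inequality gives
   v_p(n, f) <= 2 Var_p(g) + 2 n^(1/p) (2M + eps), and n^(1/p) <= 1/t.

   Put d slightly above 4 t v_p(n, f) and let g = f o phi, where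
   phi maps x to the last point of a fine grid, left of x, at which a greedy
   walk along the grid saw f move by more than d; then |f - g| <= 2d.  Every
   interval on which g varies contains such a jump of f of size > d, and these
   jumps are disjoint, so more than n of them would give n d^p <= v_p(n, f)^p,
   which the choice of d excludes.  Hence Var_p(g) <= v_p(n, f). *)

Section RealPower.
Context {R : realType}.
Implicit Types p x y c : R.

Lemma ler_powR2r {p x y} : 0 <= p -> 0 <= x -> x <= y -> x `^ p <= y `^ p.
Proof.
by move=> p0 x0 xy; apply: (ge0_ler_powR p0); rewrite // nnegrE // (le_trans x0).
Qed.

Lemma powRK p x : p != 0 -> 0 <= x -> (x `^ p) `^ p^-1 = x.
Proof. by move=> p0 x0; rewrite -powRrM mulfV // powRr1. Qed.

Lemma powRVK p x : p != 0 -> 0 <= x -> (x `^ p^-1) `^ p = x.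
Proof. by move=> p0 x0; rewrite -powRrM mulVf // powRr1. Qed.

Lemma powRV_le p x y : 0 < p -> 0 <= x -> 0 <= y ->
  (x `^ p^-1 <= y) = (x <= y `^ p).
Proof.
move=> p0 x0 y0; have pn0 : p != 0 := lt0r_neq0 p0.
apply/idP/idP => h.
  by rewrite -(powRVK p x pn0 x0); apply: ler_powR2r; rewrite ?powR_ge0 ?(ltW p0).
by rewrite -(powRK p y pn0 y0); apply: ler_powR2r; rewrite ?invr_ge0 ?(ltW p0).
Qed.

Lemma powR_superadditive p x y : 1 <= p -> 0 <= x -> 0 <= y ->
  x `^ p + y `^ p <= (x + y) `^ p.
Proof.
move=> p1 x0 y0; have p0 : p != 0 by rewrite gt_eqF // (lt_le_trans ltr01).
have [s0|s_neq0] := eqVneq (x + y) 0.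
  have [-> ->] : x = 0 /\ y = 0 by split; lra.
  by rewrite addr0 powR0 // addr0.
have s_gt0 : 0 < x + y by rewrite lt_neqAle eq_sym s_neq0 addr_ge0.
have below_id z : 0 <= z <= x + y -> z `^ p <= (x + y) `^ p * (z / (x + y)).
  case/andP=> z0 zs; rewrite -{1}[z](divfK s_neq0) mulrC.
  rewrite powRM ?divr_ge0 ?(ltW s_gt0) // ler_wpM2l ?powR_ge0 //.
  have [->|z_neq0] := eqVneq z 0; first by rewrite mul0r powR0.
  apply: ge1r_powR p1; rewrite divr_gt0 ?ler_pdivrMr ?mul1r //.
  by rewrite lt_neqAle eq_sym z_neq0.
apply: le_trans (lerD (below_id x _) (below_id y _)) _; try lra.
by rewrite -mulrDr -mulrDl divff // mulr1.
Qed.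

Lemma powRD_le p x c : 0 <= p -> 0 <= x -> 0 <= c ->
  (x + c) `^ p <= 2 `^ p * (x `^ p + c `^ p).
Proof.
move=> p0 x0 c0; wlog xc : x c x0 c0 / x <= c.
  move=> hw; have [|cx] := leP x c; first exact: hw.
  by rewrite addrC [_ + c `^ p]addrC hw // ltW.
have xc2 : x + c <= 2 * c by lra.
apply: le_trans (ler_powR2r p0 (addr_ge0 x0 c0) xc2) _.
by rewrite powRM // ler_wpM2l ?powR_ge0 // lerDr powR_ge0.
Qed.

End RealPower.

Lemma sum_powRD_le {R : realType} {p V c : R} {n} {x : 'I_n -> R} :
  1 <= p -> (forall j, 0 <= x j) -> 0 <= V -> 0 <= c ->
  \sum_(j < n) x j `^ p <= V `^ p ->
  \sum_(j < n) (x j + c) `^ p <= (2 * (V + n%:R `^ p^-1 * c)) `^ p.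
Proof.
move=> p1 x0 V0 c0 sumV; have p0 : 0 < p := lt_le_trans ltr01 p1.
set w := n%:R `^ p^-1; have w0 : 0 <= w := powR_ge0 _ _.
have sum_c : \sum_(j < n) c `^ p = (w * c) `^ p.
  by rewrite sumr_const card_ord powRM // powRVK ?gt_eqF // mulr_natl.
apply: le_trans (ler_sum _ (fun j _ => powRD_le _ _ _ (ltW p0) (x0 j) c0)) _.
rewrite -mulr_sumr big_split /= sum_c [leRHS]powRM ?addr_ge0 ?mulr_ge0 //.
rewrite ler_wpM2l ?powR_ge0 //.
apply: le_trans (powR_superadditive _ _ _ p1 V0 (mulr_ge0 w0 c0)).
by rewrite lerD2r.
Qed.

Section ContinuityOn01.
Context {R : realType} {f : R -> R}.
Hypothesis f_cont : {within `[0, 1]%classic, continuous f}.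

Lemma continuous_on01_dist x : 0 <= x <= 1 -> forall e, 0 < e ->
  exists2 r, 0 < r &
    forall y, 0 <= y <= 1 -> `|x - y| < r -> `|f x - f y| < e.
Proof.
move=> x01 e e0; have x01' : `[0, 1]%classic x by rewrite /= in_itv.
have := proj1 (subspace_continuousP _ _) f_cont x x01'.
move/cvgrPdist_lt/(_ e e0); rewrite near_withinE => /nbhs_ballP [r /= r0 hr].
exists r => // y y01 xy; apply: hr; last by rewrite /= in_itv.
by rewrite -ball_normE.
Qed.

Lemma uniform_continuous_on01 e : 0 < e -> exists2 r, 0 < r &
  forall x y, 0 <= x <= 1 -> 0 <= y <= 1 -> `|x - y| < r -> `|f x - f y| < e.
Proof.
move=> e0; have e20 : 0 < e / 2 by rewrite divr_gt0.
have := @segment_compact R 0 1.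
move/compact_near_coveringP/near_covering_withinP.
move=> /(_ R (0^'+)
  (fun r x => forall y, 0 <= y <= 1 -> `|x - y| < r -> `|f x - f y| < e)).
case=> [x x01|r r0 hr]; last first.
  exists (r / 2); rewrite ?divr_gt0 // => x y x01 y01 xy.
  apply: (hr (r / 2)); rewrite ?divr_gt0 //= sub0r normrN gtr0_norm ?divr_gt0 //.
  by rewrite ltr_pdivrMr // ltr_pMr // ltr1n.
have x01' : 0 <= x <= 1 by move: x01; rewrite /= in_itv.
have [r r0 hr] := @continuous_on01_dist x x01' _ e20.
have r20 : 0 < r / 2 by rewrite divr_gt0.
exists (ball x (r / 2), [set s | 0 < s < r / 2]) => /=.
  split; first exact: nbhsx_ballx.
  near=> s; apply/andP; split; near: s; [exact: nbhs_right_gt | exact: nbhs_right_lt].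
move=> [x' s] /= [xx' /andP[s0 sr]] x'01 y y01 x'y.
have {}x'01 : 0 <= x' <= 1 by move: x'01; rewrite /= in_itv.
move: xx'; rewrite -ball_normE /= => xx'.
have r2r : r / 2 < r by rewrite ltr_pdivrMr // ltr_pMr // ltr1n.
have fxx' := hr _ x'01 (lt_trans xx' r2r).
have xy : `|x - y| < r.
  rewrite (splitr r); apply: le_lt_trans (ler_distD x' x y) _.
  by apply: ltrD => //; apply: lt_trans sr.
apply: le_lt_trans (ler_distD (f x) (f x') (f y)) _.
by rewrite (splitr e) distrC ltrD // hr.
Unshelve. all: by end_near.
Qed.

End ContinuityOn01.

Lemma negligible_itv_point {R : realType} {N : set R} {a b : R} :
  (@lebesgue_measure R).-negligible N -> a < b -> exists2 x, a <= x <= b & ~ N x.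
Proof.
move=> [A [mA A0 NA]] ab; apply: contrapT => noN.
have abA : `[a, b]%classic `<=` A.
  move=> x /=; rewrite in_itv /= => xab; apply: NA.
  by apply: contrapT => Nx; apply: noN; exists x.
have := le_measure (@lebesgue_measure R) _ _ abA.
rewrite !inE => /(_ (measurable_itv _) mA).
have := @lebesgue_measure_itv R `[a, b]; rewrite /= lte_fin ab A0 => ->.
by rewrite lee_fin subr_le0 leNgt ab.
Qed.

Section Linfinity01.
Context {R : realType}.
Implicit Types h : R -> R.

Lemma Linf01_ge0 h : (0 <= Linf01 h)%E.
Proof.
apply: le_ereal_inf_tmp => M hM; rewrite leNgt; apply/negP => M0.
have [x /andP[x0 x1] Nx] := negligible_itv_point hM (@ltr01 R).
apply: Nx; split; first by rewrite /= x0 x1.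
by apply: lt_le_trans M0 _; rewrite lee_fin normr_ge0.
Qed.

Lemma Linf01_le {h K} : (forall x, 0 <= x <= 1 -> `|h x| <= K) ->
  (Linf01 h <= K%:E)%E.
Proof.
move=> hK; apply: ereal_inf_lbound.
apply: (negligibleS _ (negligible_set0 _)) => x [/= /hK hxK].
by rewrite lte_fin ltNge hxK.
Qed.

Lemma Linf01_lt_point h K a b : (Linf01 h < K%:E)%E ->
  0 <= a -> a < b -> b <= 1 -> exists2 x, a <= x <= b & `|h x| <= K.
Proof.
move=> /ereal_inf_lt [M hM MK] a0 ab b1.
have [x /andP[ax xb] Nx] := negligible_itv_point hM ab.
exists x; first by rewrite ax.
rewrite -lee_fin; apply: le_trans (ltW MK); rewrite leNgt; apply/negP => Mhx.
by apply: Nx; split; rewrite //= (le_trans a0 ax) (le_trans xb b1).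
Qed.

End Linfinity01.

Section Nonoverlapping.
Context {R : realType}.

Lemma nonoverlapping0 n : nonoverlapping (fun _ : 'I_n => 0 : R) (fun _ => 0).
Proof. by split=> [j|i j _]; [rewrite lexx ler01 | left]. Qed.

Lemma nonoverlapping_sub n (a b a' b' : 'I_n -> R) :
  (forall j, [/\ a j <= a' j, a' j <= b' j & b' j <= b j]) ->
  nonoverlapping a b -> nonoverlapping a' b'.
Proof.
move=> sub [ab01 ov]; split=> [j|i j ij].
  by have [? ? ?] := sub j; have [? [? ?]] := ab01 j; split; [|split]; lra.
have [? ? ?] := sub i; have [? ? ?] := sub j.
by case: (ov i j ij); [left|right]; lra.
Qed.

Lemma nonoverlapping_comp n (a b : 'I_n -> R) (phi : R -> R) :
  (forall x y, 0 <= x -> x <= y -> y <= 1 -> phi x <= phi y) ->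
  (forall x, 0 <= x <= 1 -> 0 <= phi x <= 1) ->
  nonoverlapping a b -> nonoverlapping (phi \o a) (phi \o b).
Proof.
move=> phi_homo phi01 [ab01 ov]; split=> [j|i j ij] /=.
  have [a0 [ab b1]] := ab01 j.
  have /andP[pa0 _] : 0 <= phi (a j) <= 1 by apply: phi01; rewrite a0 (le_trans ab).
  have /andP[_ pb1] : 0 <= phi (b j) <= 1 by apply: phi01; rewrite b1 (le_trans a0).
  by split=> //; split=> //; apply: phi_homo.
have [ai0 [abi bi1]] := ab01 i; have [aj0 [abj bj1]] := ab01 j.
by case: (ov i j ij) => h; [left|right]; apply: phi_homo => //; lra.
Qed.

Lemma nonoverlapping_subseq {m n} {A B : 'I_m -> R} {s : seq 'I_m} :
  nonoverlapping A B -> uniq s -> (size s <= n)%N ->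
  exists a b : 'I_n -> R, nonoverlapping a b /\
    forall F : R -> R -> R, F 0 0 = 0 ->
      \sum_(i < n) F (a i) (b i) = \sum_(j <- s) F (A j) (B j).
Proof.
case: s => [|j0 s'] [AB01 ov] us sn.
  exists (fun=> 0), (fun=> 0); split=> [|F F00]; first exact: nonoverlapping0.
  by rewrite big_nil big1.
set s := j0 :: s' in us sn *.
pose a (i : 'I_n) := nth 0 (map A s) i; pose b (i : 'I_n) := nth 0 (map B s) i.
have ab_in (i : 'I_n) : (i < size s)%N -> a i = A (nth j0 s i) /\ b i = B (nth j0 s i).
  by move=> lti; rewrite /a /b !(nth_map j0).
have ab_out (i : 'I_n) : (size s <= i)%N -> a i = 0 /\ b i = 0.
  by move=> lei; rewrite /a /b !nth_default ?size_map.
have a0 i : 0 <= a i.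
  have [/ab_in[-> _]|/ab_out[-> _]] := ltnP i (size s); last by [].
  by case: (AB01 (nth j0 s i)).
exists a, b; split; first split=> [i|i j ij].
- have [/ab_in[-> ->]|/ab_out[-> ->]] := ltnP i (size s); first exact: AB01.
  by rewrite lexx ler01.
- have [lti|/ab_out[_ ->]] := ltnP i (size s); last by left.
  have [ltj|/ab_out[_ ->]] := ltnP j (size s); last by right.
  have [-> ->] := ab_in _ lti; have [-> ->] := ab_in _ ltj.
  by apply: ov; rewrite nth_uniq // -(inj_eq val_inj).
move=> F F00; rewrite (big_nth j0) big_mkord.
rewrite (big_ord_widen n (fun i => F (A (nth j0 s i)) (B (nth j0 s i))) sn).
rewrite [RHS]big_mkcond.
apply: eq_bigr => i _; case: ltnP => [lti|/ab_out[-> ->] //].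
by have [-> ->] := ab_in _ lti.
Qed.

End Nonoverlapping.

Section PVariation.
Context {R : realType} {p : R}.
Hypothesis p_gt0 : 0 < p.

Lemma pvar_sum_le g n (a b : 'I_n -> R) U : 0 <= U ->
  (pvar_sum p g a b <= U) = (\sum_(j < n) `|g (b j) - g (a j)| `^ p <= U `^ p).
Proof. by move=> U0; rewrite powRV_le // sumr_ge0 // => j _; apply: powR_ge0. Qed.

Lemma pvar_sum0 g n : pvar_sum p g (fun _ : 'I_n => 0) (fun _ => 0) = 0.
Proof.
rewrite /pvar_sum big1 ?powR0 ?invr_eq0 ?gt_eqF // => j _.
by rewrite subrr normr0 powR0 ?gt_eqF.
Qed.

Lemma pvar_sum_le_upsilon {f n} {a b : 'I_n -> R} :
  nonoverlapping a b -> ((pvar_sum p f a b)%:E <= upsilon p n f)%E.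
Proof. by move=> ab; apply: ereal_sup_ubound; exists a, b. Qed.

Lemma upsilon_ge0 f n : (0 <= upsilon p n f)%E.
Proof.
by apply: le_trans _ (pvar_sum_le_upsilon (nonoverlapping0 n)); rewrite pvar_sum0.
Qed.

Lemma pvar_sum_le_Varp {g n} {a b : 'I_n -> R} :
  nonoverlapping a b -> ((pvar_sum p g a b)%:E <= Varp p g)%E.
Proof. by move=> ab; apply: ereal_sup_ubound; exists n, a, b. Qed.

Lemma Varp_ge0 g : (0 <= Varp p g)%E.
Proof.
by apply: le_trans _ (pvar_sum_le_Varp (nonoverlapping0 0)); rewrite pvar_sum0.
Qed.

Lemma upsilon_le f n U :
  (forall a b : 'I_n -> R, nonoverlapping a b -> pvar_sum p f a b <= U) ->
  (upsilon p n f <= U%:E)%E.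
Proof.
by move=> fU; apply: ge_ereal_sup => _ [a [b [ab ->]]]; rewrite lee_fin fU.
Qed.

Lemma Varp_le g U :
  (forall m (a b : 'I_m -> R), nonoverlapping a b -> pvar_sum p g a b <= U) ->
  (Varp p g <= U%:E)%E.
Proof.
by move=> gU; apply: ge_ereal_sup => _ [m [a [b [ab ->]]]]; rewrite lee_fin gU.
Qed.

Lemma sum_increments_le_upsilon {f n U m} {A B : 'I_m -> R} {s : seq 'I_m} :
  (upsilon p n f <= U%:E)%E -> nonoverlapping A B -> uniq s -> (size s <= n)%N ->
  \sum_(j <- s) `|f (B j) - f (A j)| `^ p <= U `^ p.
Proof.
move=> fU AB us sn.
have U0 : 0 <= U by rewrite -lee_fin (le_trans (upsilon_ge0 f n)).
have [a [b [ab sum_ab]]] := nonoverlapping_subseq AB us sn.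
rewrite -(sum_ab (fun x y => `|f y - f x| `^ p)); last first.
  by rewrite subrr normr0 powR0 ?gt_eqF.
by rewrite -pvar_sum_le // -lee_fin (le_trans _ fU) ?pvar_sum_le_upsilon.
Qed.

Lemma pvar_sum_le_of_jumps {f n U d m} {A B : 'I_m -> R} :
  0 <= d -> U `^ p < n%:R * d `^ p -> (upsilon p n f <= U%:E)%E ->
  nonoverlapping A B ->
  (forall j, f (A j) != f (B j) ->
    exists2 z, A j <= z <= B j & d < `|f (B j) - f z|) ->
  pvar_sum p f A B <= U.
Proof.
move=> d0 Und fU AB jumps; have [AB01 _] := AB.
have U0 : 0 <= U by rewrite -lee_fin (le_trans (upsilon_ge0 f n)).
pose J := [set j | f (A j) != f (B j)]%SET.
have [z zP] : {z : 'I_m -> R & forall j,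
    A j <= z j <= B j /\ (j \in J -> d < `|f (B j) - f (z j)|)}.
  apply: (@choice _ _ (fun j x => A j <= x <= B j /\ (j \in J -> d < `|f (B j) - f x|))).
  move=> j; have [jJ|_] := boolP (j \in J).
    have /jumps[x ? ?] : f (A j) != f (B j) by rewrite inE in jJ.
    by exists x.
  by exists (A j); have [_ [? _]] := AB01 j; rewrite lexx.
rewrite pvar_sum_le // (bigID (mem J)) /= [X in _ + X]big1 ?addr0 => [|j]; last first.
  by rewrite inE negbK => /eqP ->; rewrite subrr normr0 powR0 ?gt_eqF.
have [Jn|nJ] := leqP #|J| n.
  rewrite -big_enum; apply: sum_increments_le_upsilon fU AB (enum_uniq _) _.
  by rewrite -cardE.
pose s := take n (enum J).
have size_s : size s = n by rewrite size_takel // -cardE ltnW.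
have zB : nonoverlapping z B.
  by apply: nonoverlapping_sub AB => j; have [/andP[? ?] _] := zP j; split.
have us : uniq s := take_uniq _ (enum_uniq (mem J)).
have := sum_increments_le_upsilon fU zB us (eq_leq size_s).
apply: contraTT => _; rewrite -ltNge; apply: lt_le_trans Und _.
have -> : n%:R * d `^ p = \sum_(j <- s) d `^ p.
  by rewrite big_const_seq count_predT size_s iter_addr_0 mulr_natl.
rewrite !big_seq; apply: ler_sum => j /mem_take; rewrite mem_enum => /(proj2 (zP j)) dlt.
by apply: ler_powR2r; rewrite ?(ltW p_gt0) ?(ltW dlt).
Qed.

End PVariation.

Section LastJump.
Context {R : realType} (y : nat -> R) (d : R).

Fixpoint last_jump i :=
  if i is i'.+1 then
    if d < `|y i'.+1 - y (last_jump i')| then i'.+1 else last_jump i'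
  else 0%N.

Lemma last_jump_le i : (last_jump i <= i)%N.
Proof. by elim: i => //= i IH; case: ifP => // _; apply: leq_trans IH _. Qed.

Lemma last_jump_homo : {homo last_jump : i k / (i <= k)%N}.
Proof.
apply: homo_leq leqnn leq_trans _ => i /=.
by case: ifP => // _; apply: leq_trans (last_jump_le i) _.
Qed.

Lemma last_jump_id i : last_jump (last_jump i) = last_jump i.
Proof.
elim: i => //= i IH; case: ifP => [jump|_ //].
by rewrite /= jump.
Qed.

Lemma last_jump_dist i : 0 <= d -> `|y i - y (last_jump i)| <= d.
Proof.
move=> d0; case: i => [|i] /=; first by rewrite subrr normr0.
by case: ltP => // _; rewrite subrr normr0.
Qed.

Lemma last_jump_gap i k : (i <= k)%N -> (last_jump i < last_jump k)%N ->
  (last_jump i <= last_jump (last_jump k).-1)%N /\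
  d < `|y (last_jump k) - y (last_jump (last_jump k).-1)|.
Proof.
move=> ik; set v := last_jump k => ltv.
have v0 : (0 < v)%N := leq_ltn_trans (leq0n _) ltv.
split.
  apply: last_jump_homo; rewrite -ltnS prednK // ltnNge; apply/negP => vi.
  by have := last_jump_homo _ _ vi; rewrite last_jump_id leqNgt ltv.
have := last_jump_id k; rewrite -/v; case: v v0 {ltv} => // v _ /=.
by case: ifP => // _ sv; have := last_jump_le v; rewrite sv ltnn.
Qed.

End LastJump.

Arguments last_jump_gap {R y d i k}.

Section StepFunction.
Context {R : realType} (f : R -> R) (d : R) (N : nat).
Hypothesis N_gt0 : (0 < N)%N.

Definition step_point (x : R) : R :=
  (last_jump (fun k => f (k%:R / N%:R)) d (Num.truncn (x * N%:R)))%:R / N%:R.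

Local Notation s := (last_jump (fun k => f (k%:R / N%:R)) d).

Lemma ler_grid i k : (i <= k)%N -> (i%:R / N%:R : R) <= k%:R / N%:R.
Proof. by move=> ik; rewrite ler_wpM2r ?invr_ge0 ?ler0n // ler_nat. Qed.

Lemma grid01 i : (i <= N)%N -> 0 <= (i%:R / N%:R : R) <= 1.
Proof. by move=> iN; rewrite divr_ge0 //= ler_pdivrMr ?ltr0n // mul1r ler_nat. Qed.

Lemma step_point_homo x x' : 0 <= x -> x <= x' -> step_point x <= step_point x'.
Proof.
move=> x0 xx'; apply/ler_grid/last_jump_homo/le_truncn.
by rewrite ler_wpM2r.
Qed.

Lemma step_point01 x : 0 <= x <= 1 -> 0 <= step_point x <= 1.
Proof.
case/andP=> x0 x1; apply/grid01/(leq_trans (last_jump_le _ _ _)).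
by rewrite -[X in (_ <= X)%N](@natrK R N); apply: le_truncn; rewrite ler_piMl.
Qed.

Lemma step_point_dist x : 0 <= d ->
  (forall x y, 0 <= x <= 1 -> 0 <= y <= 1 -> `|x - y| < N%:R^-1 ->
    `|f x - f y| < d) ->
  0 <= x <= 1 -> `|f x - f (step_point x)| <= 2 * d.
Proof.
move=> d0 f_unif x01; have /andP[x0 x1] := x01.
set i := Num.truncn (x * N%:R).
have /andP[ilo ihi] := truncn_itv (mulr_ge0 x0 (ler0n R N)).
have iN : (i <= N)%N.
  by rewrite -[X in (_ <= X)%N](@natrK R N); apply: le_truncn; rewrite ler_piMl.
have fxi : `|f x - f (i%:R / N%:R)| < d.
  apply: f_unif => //; first exact: grid01.
  have N0 : (0 : R) < N%:R by rewrite ltr0n.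
  rewrite ger0_norm ?subr_ge0 ?ler_pdivrMr // ltrBlDr.
  by rewrite -[X in _ < X + _]mul1r -mulrDl addrC natr1 ltr_pdivlMr.
rewrite mulr_natl mulr2n; apply: le_trans (ler_distD (f (i%:R / N%:R)) _ _) _.
apply: lerD; first exact: ltW.
exact: (last_jump_dist (fun k => f (k%:R / N%:R)) d i d0).
Qed.

Lemma step_point_jump x x' : 0 <= x -> x <= x' ->
  f (step_point x) != f (step_point x') ->
  exists2 z, step_point x <= z <= step_point x' & d < `|f (step_point x') - f z|.
Proof.
move=> x0 xx' jump; rewrite /step_point in jump *.
set i := Num.truncn (x * N%:R) in jump *.
set k := Num.truncn (x' * N%:R) in jump *.
have ik : (i <= k)%N by apply: le_truncn; rewrite ler_wpM2r.
have lt_ik : (s i < s k)%N.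
  rewrite ltn_neqAle last_jump_homo // andbT.
  by apply: contraNneq jump => ->.
have [le_i dlt] := last_jump_gap ik lt_ik.
exists ((s (s k).-1)%:R / N%:R) => //.
rewrite !ler_grid //; apply: leq_trans (last_jump_le _ _ _) _; exact: leq_pred.
Qed.

End StepFunction.

Lemma step_approximation {R : realType} {p U d : R} {n} {f : R -> R} :
  0 < p -> 0 < d -> {within `[0, 1]%classic, continuous f} ->
  U `^ p < n%:R * d `^ p -> (upsilon p n f <= U%:E)%E ->
  exists g : R -> R,
    (forall x, 0 <= x <= 1 -> `|f x - g x| <= 2 * d) /\ (Varp p g <= U%:E)%E.
Proof.
move=> p0 d0 fc Und fU.
have [eta eta0 f_unif] := uniform_continuous_on01 fc _ d0.
pose N := (Num.truncn eta^-1).+1.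
have N_eta : N%:R^-1 < eta.
  by rewrite -[eta]invrK ltf_pV2 ?posrE ?invr_gt0 ?ltr0n // truncnS_gt.
exists (f \o step_point f d N); split=> [x x01|].
  apply: step_point_dist => // [|x' y x'01 y01 x'y]; first exact: ltW.
  by apply: f_unif => //; apply: lt_trans N_eta.
apply: Varp_le => // m a b ab.
apply: (pvar_sum_le_of_jumps p0 (ltW d0) Und fU).
  apply: nonoverlapping_comp ab => [x y x0 xy _|]; first exact: step_point_homo.
  exact: step_point01.
move=> j; have [a0 [ab' _]] := ab.1 j; exact: step_point_jump.
Qed.

Lemma increment_le_approx_increment {R : realType} (f g : R -> R) (K e a b : R) :
  {within `[0, 1]%classic, continuous f} ->
  (Linf01 (fun x => (f x - g x)%R) < K%:E)%E -> 0 < e ->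
  0 <= a -> a <= b -> b <= 1 ->
  exists q : R * R, [/\ a <= q.1, q.1 <= q.2, q.2 <= b &
    `|f b - f a| <= `|g q.2 - g q.1| + 2 * (K + e)].
Proof.
move=> fc fgK e0 a0 ab b1.
have K0 : 0 <= K by rewrite -lee_fin (le_trans (Linf01_ge0 _) (ltW fgK)).
have [{}ab|ba] := ltP a b; last first.
  exists (a, a); have -> : b = a by apply/eqP; rewrite eq_le ab ba.
  by rewrite /= lexx !subrr normr0 add0r mulr_ge0 ?addr_ge0 ?(ltW e0).
have [eta eta0 f_unif] := uniform_continuous_on01 fc _ e0.
pose r := Num.min (eta / 2) ((b - a) / 2).
have r0 : 0 < r by rewrite lt_min !divr_gt0 // subr_gt0.
have r_eta : r <= eta / 2 by rewrite ge_min lexx.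
have r_ab : r <= (b - a) / 2 by rewrite ge_min lexx orbT.
have [x1 /andP[ax1 x1r] fgx1] : exists2 x : R, a <= x <= a + r & `|f x - g x| <= K.
  by apply: Linf01_lt_point fgK _ _ _ => //; lra.
have [x2 /andP[x2r x2b] fgx2] : exists2 x : R, b - r <= x <= b & `|f x - g x| <= K.
  by apply: Linf01_lt_point fgK _ _ _ => //; lra.
have fax1 : `|f a - f x1| < e.
  by apply: f_unif; rewrite ?ler0_norm; lra.
have fbx2 : `|f b - f x2| < e.
  by apply: f_unif; rewrite ?ger0_norm; lra.
exists (x1, x2); split=> //=; try lra.
move: fax1 fbx2 fgx1 fgx2; rewrite !ltr_norml !ler_norml.
have /ler_normlP[? ?] := lexx `|g x2 - g x1|.
lra.
Qed.

Lemma pvar_sum_le_approx {R : realType} {p t V K e : R} {n} {f g : R -> R}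
    {a b : 'I_n -> R} :
  1 <= p -> 0 < t -> n%:R `^ p^-1 * t <= 1 ->
  {within `[0, 1]%classic, continuous f} ->
  (Varp p g <= V%:E)%E -> (Linf01 (fun x => (f x - g x)%R) < K%:E)%E -> 0 < e ->
  nonoverlapping a b -> pvar_sum p f a b <= 2 * V + 4 * (K + e) / t.
Proof.
move=> p1 t0 nt fc gV fgK e0 ab; have p0 : 0 < p := lt_le_trans ltr01 p1.
have V0 : 0 <= V by rewrite -lee_fin; apply: le_trans (Varp_ge0 p0 g) gV.
have K0 : 0 <= K by rewrite -lee_fin (le_trans (Linf01_ge0 _) (ltW fgK)).
set c := 2 * (K + e); have c0 : 0 <= c by rewrite mulr_ge0 ?addr_ge0 ?(ltW e0).
have near_ends j : exists q : R * R, [/\ a j <= q.1, q.1 <= q.2, q.2 <= b j &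
    `|f (b j) - f (a j)| <= `|g q.2 - g q.1| + c].
  by have [a0 [abj b1]] := ab.1 j; apply: increment_le_approx_increment.
have [q qP] := choice near_ends.
have ab' : nonoverlapping (fun j => (q j).1) (fun j => (q j).2).
  by apply: nonoverlapping_sub ab => j; have [] := qP j.
have sum_g : \sum_(j < n) `|g (q j).2 - g (q j).1| `^ p <= V `^ p.
  by rewrite -(pvar_sum_le p0) // -lee_fin (le_trans (pvar_sum_le_Varp ab')).
apply: (@le_trans _ _ (2 * (V + n%:R `^ p^-1 * c))).
  rewrite (pvar_sum_le p0); last by rewrite mulr_ge0 // addr_ge0 // mulr_ge0 // powR_ge0.
  apply: le_trans _ (sum_powRD_le p1 (fun j => normr_ge0 _) V0 c0 sum_g).
  by apply: ler_sum => j _; have [_ _ _ fq] := qP j; apply: ler_powR2r; rewrite ?(ltW p0).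
have wc : n%:R `^ p^-1 * c <= c / t by rewrite ler_pdivlMr // mulrAC ler_piMl.
have -> : 4 * (K + e) / t = 2 * (c / t) by rewrite /c !mulrA -natrM.
lra.
Qed.

Section KFunctional.
Context {R : realType} {p t : R} {n : nat} {f : R -> R}.
Hypotheses (p_ge1 : 1 <= p) (t_gt0 : 0 < t).
Hypothesis f_cont : {within `[0, 1]%classic, continuous f}.

Let p_gt0 : 0 < p := lt_le_trans ltr01 p_ge1.

Lemma Kfun_ge_upsilon : n%:R `^ p^-1 * t <= 1 ->
  ((4^-1 * t)%:E * upsilon p n f <= Kfun p f t)%E.
Proof.
move=> nt; apply: le_ereal_inf_tmp => _ [g Vg_fin ->].
have Vg0 := Varp_ge0 p_gt0 g.
have Vg_num : Varp p g \is a fin_num by rewrite ge0_fin_numE.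
have V0 : 0 <= fine (Varp p g) := fine_ge0 Vg0.
rewrite -(fineK Vg_num); set V := fine _.
have := Linf01_ge0 (fun y => (f y - g y)%R).
case E : (Linf01 _) => [M||//] M0; last by rewrite addye ?leey.
have ups : (upsilon p n f <= (2 * V + 4 * M / t)%:E)%E.
  apply: upsilon_le => a b ab; apply/ler_addgt0Pr => d d0.
  pose e := d * t / 8; have e0 : 0 < e by rewrite divr_gt0 ?mulr_gt0.
  have fgK : (Linf01 (fun y => (f y - g y)%R) < (M + e)%:E)%E.
    by rewrite E lte_fin ltrDl.
  have gV : (Varp p g <= V%:E)%E by rewrite fineK.
  apply: le_trans (pvar_sum_le_approx p_ge1 t_gt0 nt f_cont gV fgK e0 ab) _.
  have -> : 4 * (M + e + e) / t = 4 * M / t + d by rewrite /e; field; rewrite gt_eqF.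
  by rewrite addrA.
apply: le_trans (lee_wpmul2l _ ups) _.
  by rewrite lee_fin mulr_ge0 ?invr_ge0 ?(ltW t_gt0).
rewrite -EFinM -EFinD lee_fin.
have -> : 4^-1 * t * (2 * V + 4 * M / t) = M + t * V / 2.
  by field; rewrite gt_eqF.
by rewrite lerD2l ler_pdivrMr // ler_peMr ?mulr_ge0 ?(ltW t_gt0) // ler1n.
Qed.

Lemma Kfun_le_upsilon : 1 <= n%:R * (4 * t) `^ p ->
  (Kfun p f t <= (9 * t)%:E * upsilon p n f)%E.
Proof.
move=> n4t; have := upsilon_ge0 p_gt0 f n.
case E : (upsilon p n f) => [U||//] U0; last first.
  by rewrite gt0_muley ?leey // lte_fin mulr_gt0.
rewrite lee_fin in U0; apply/lee_addgt0Pr => e e0.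
have tU0 : 0 <= 4 * t * U by rewrite !mulr_ge0 // ltW.
pose d := 4 * t * U + e / 2; have d0 : 0 < d by rewrite /d; lra.
have n0 : (0 : R) < n%:R by case: n n4t => [|m]; rewrite ?mul0r ?ler10 ?ltr0Sn.
have Und : U `^ p < n%:R * d `^ p.
  apply: le_lt_trans (_ : _ <= n%:R * (4 * t * U) `^ p) _.
    rewrite [X in _ <= _ * X]powRM ?mulr_ge0 ?(ltW t_gt0) // mulrA.
    by rewrite -[leLHS]mul1r ler_wpM2r ?powR_ge0.
  rewrite ltr_pM2l //; apply: gt0_ltr_powR; rewrite ?nnegrE ?(ltW d0) //.
  by rewrite /d; lra.
have fU : (upsilon p n f <= U%:E)%E by rewrite E.
have [g [fg Vg]] := step_approximation p_gt0 d0 f_cont Und fU.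
have Kg : (Kfun p f t <= Linf01 (fun y => (f y - g y)%R) + t%:E * Varp p g)%E.
  by apply: ereal_inf_lbound; exists g => //; apply: le_lt_trans Vg (ltry _).
have tVg : (t%:E * Varp p g <= t%:E * U%:E)%E.
  by apply: lee_wpmul2l => //; rewrite lee_fin ltW.
apply: le_trans Kg (le_trans (leeD (Linf01_le fg) tVg) _).
by rewrite -!EFinM -!EFinD lee_fin /d; lra.
Qed.

End KFunctional.

Section Nindex.
Context {R : realType} {p t : R}.
Hypotheses (p_gt0 : 0 < p) (t_gt0 : 0 < t) (t_le1 : t <= 1).

Let m := Num.truncn t^-1.
Let P : R := m%:R `^ p.

Let m_itv : m%:R <= t^-1 < m.+1%:R.
Proof. by apply: truncn_itv; rewrite invr_ge0 ltW. Qed.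

Let nindex_itv : (nindex p t)%:R <= P < (nindex p t).+1%:R.
Proof. exact/truncn_itv/powR_ge0. Qed.

Lemma nindex_root_le : (nindex p t)%:R `^ p^-1 * t <= 1.
Proof.
have [nP _] := andP nindex_itv; have [mt _] := andP m_itv.
rewrite -ler_pdivlMr // div1r.
apply: le_trans (ler_powR2r _ _ nP) _; rewrite ?invr_ge0 ?(ltW p_gt0) //.
by rewrite /P powRK ?gt_eqF.
Qed.

Lemma nindex_ge : 1 <= p -> 1 <= (nindex p t)%:R * (4 * t) `^ p.
Proof.
move=> p1; have [mt tm] := andP m_itv; have [nP Pn] := andP nindex_itv.
have m1 : 1 <= (m%:R : R).
  by rewrite ler1n truncn_gt0 -invr1 lef_pV2 ?posrE.
have P1 : 1 <= P by have := ler_powR2r (ltW p_gt0) ler01 m1; rewrite powR1.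
have n1 : 1 <= (nindex p t)%:R :> R by rewrite ler1n truncn_gt0.
have P_2n : P <= 2 * (nindex p t)%:R by rewrite -natr1 in Pn; lra.
have two_le : 2 <= P * (4 * t) `^ p.
  rewrite /P -powRM ?ler0n ?mulr_ge0 ?(ltW t_gt0) //.
  apply: le_trans (le1r_powR _ p1) _; first by rewrite ler1n.
  apply: ler_powR2r; rewrite ?(ltW p_gt0) //.
  have : 1 < t * (m%:R + 1) by rewrite -ltr_pdivrMl // mulr1 natr1.
  nra.
have : P * (4 * t) `^ p <= 2 * (nindex p t)%:R * (4 * t) `^ p.
  by rewrite ler_wpM2r ?powR_ge0.
nra.
Qed.

End Nindex.

Theorem theorem4p2 (R : realType) (p : R) : 1 <= p ->
  exists c1 c2 : R, 0 < c1 /\ c1 <= c2 /\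
  forall f : R -> R, {within `[0, 1]%classic, continuous f} ->
  forall t : R, 0 < t -> t <= 1 ->
    ((c1 * t)%:E * upsilon p (nindex p t) f <= Kfun p f t)%E /\
    (Kfun p f t <= (c2 * t)%:E * upsilon p (nindex p t) f)%E.
Proof.
move=> p1; have p0 : 0 < p := lt_le_trans ltr01 p1.
exists 4^-1, 9; split; first by rewrite invr_gt0.
split; first lra.
move=> f fc t t0 t1; split.
- exact: Kfun_ge_upsilon p1 t0 fc (nindex_root_le p0 t0).
- exact: Kfun_le_upsilon p1 t0 fc (nindex_ge p0 t0 t1 p1).
Qed.
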